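(* Let $v_j,v_i\in V(D^+)\setminus\{s\}$ be distinct vertices with $d_s(v_j)\le d_s(v_i)$. If $y\in C(v_j)\cap C(v_i)$ and $v_j$ is not an ancestor of $v_i$ in $D^+$, then $g^*(v_j)\neq\infty$ and $\min_{u\prec y} g(v_i,u)\ge g^*(v_j)$.
   Context: $G=(V,E,w)$ is a simple, connected, undirected graph with positive edge lengths, $s,t\in V$, $d(\cdot,\cdot)$ the shortest path distance in $G$, $d_s(v)=d(s,v)$. $D$ is the union of all shortest $st$-paths of $G$, and $D^+$ is the directed acyclic graph obtained from $D$ by orienting every edge toward $t$. $x\prec y$ means $x$ is an ancestor of $y$ in $D^+$ (a directed path of positive length from $x$ to $y$ exists). For $x\neq s$, $v\neq x$ is an $s$-dominator of $x$ if every directed path from $s$ to $x$ in $D^+$ contains $v$, and $I_s(x)$ is the $s$-dominator of $x$ closest to $x$ (every other $s$-dominator of $x$ is an $s$-dominator of $I_s(x)$). Symmetrically, for $x\neq t$, $v\neq x$ is a $t$-dominator of $x$ if every directed path from $x$ to $t$ in $D^+$ contains $v$, and $I_t(x)$ is the $t$-dominator closest to $x$. For $x\neq s$, $C(x)=\{v: I_s(x)\prec v\prec x\}$. For $x\neq s$ and $y\in V(D^+)$, $g(x,y)=d(y,x)$ if $y\in C(x)$ and $x\prec I_t(y)$, and $g(x,y)=\infty$ otherwise; $g^*(x)=\min_y g(x,y)$. A minimum over the empty set is $\infty$. *)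

From HB Require Import structures.
From mathcomp Require Import all_boot all_order all_algebra.
From mathcomp Require Import boolp classical_sets reals constructive_ereal ereal.
Set Implicit Arguments. Unset Strict Implicit. Unset Printing Implicit Defensive.
Import Order.TTheory GRing.Theory Num.Theory.
Local Open Scope ring_scope.
Local Open Scope classical_set_scope.

(* The graph G = (V, E, w): V a finite type, E given by the boolean relation e
   (simple undirected graph: e symmetric and irreflexive, hypotheses of the theorem),
   w the edge-length function (only its values on edges matter). *)
Section SPDag.
Variables (R : realType) (V : finType) (e : rel V) (w : V -> V -> R) (s t : V).

Fixpoint wlen (x : V) (p : seq V) : R :=
  if p is y :: q then w x y + wlen y q else 0.

Definition walks (x y : V) : set (seq V) :=
  [set p | path e x p /\ last x p = y].

Definition dist (x y : V) : R :=
  fine (ereal_inf [set (wlen x p)%:E | p in walks x y]).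

Definition sp_st (p : seq V) : Prop := walks s t p /\ wlen s p = dist s t.

Definition inD (v : V) : Prop := exists p, sp_st p /\ v \in s :: p.

Definition arcD (u v : V) : Prop :=
  exists p, sp_st p /\ exists p1 p2, s :: p = p1 ++ u :: v :: p2.
Definition arcb (u v : V) : bool := `[< arcD u v >].

Definition dpath (x : V) (p : seq V) (y : V) : Prop := path arcb x p /\ last x p = y.

(* x ≺ y : directed path of positive length from x to y *)
Definition anc (x y : V) : Prop := exists p, p <> [::] /\ dpath x p y.

Definition sdom (v x : V) : Prop :=
  inD x /\ x <> s /\ v <> x /\ forall p, dpath s p x -> v \in s :: p.
Definition tdom (v x : V) : Prop :=
  inD x /\ x <> t /\ v <> x /\ forall p, dpath x p t -> v \in x :: p.

(* v is the s-dominator of x closest to x *)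
Definition is_Is (x v : V) : Prop :=
  sdom v x /\ forall u, sdom u x -> u <> v -> sdom u v.
Definition is_It (x v : V) : Prop :=
  tdom v x /\ forall u, tdom u x -> u <> v -> tdom u v.

Definition Is (x : V) : option V := [pick v | `[< is_Is x v >] ].
Definition It (x : V) : option V := [pick v | `[< is_It x v >] ].

Definition inC (x v : V) : Prop :=
  if Is x is Some a then anc a v /\ anc v x else False.

Definition g (x y : V) : \bar R :=
  if `[< inC x y /\ (if It y is Some b then anc x b else False) >]
  then (dist y x)%:E else +oo%E.

Definition gstar (x : V) : \bar R :=
  \big[Order.min/+oo%E]_(y | `[< inD y >]) g x y.

End SPDag.

(* Among the vertices z with y = z or y ≺ z, z ≺ v_j, from which t can be reached
   avoiding v_j (y itself qualifies, through v_i), take one farthest from s.  Its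
   immediate t-dominator b lies on every z-t path, in particular on one through v_j;
   by maximality b cannot lie before v_j, so v_j ≺ b.  Hence z ∈ C(v_j) and
   g*(v_j) <= g(v_j, z) = d(z, v_j) = d_s(v_j) - d_s(z), which is finite.  For u ≺ y,
   either g(v_i, u) = ∞ or g(v_i, u) = d(u, v_i) >= d_s(v_i) - d_s(u), and
   d_s(v_i) >= d_s(v_j), d_s(u) < d_s(y) <= d_s(z). *)
From Pilot Require Import Defs.
From HB Require Import structures.
From mathcomp Require Import all_boot all_order all_algebra.
From mathcomp Require Import boolp classical_sets reals constructive_ereal ereal.
From mathcomp Require Import lra.
Set Implicit Arguments. Unset Strict Implicit. Unset Printing Implicit Defensive.
Import Order.TTheory GRing.Theory Num.Theory.
Local Open Scope ring_scope.
Local Open Scope classical_set_scope.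

Section PathSplitting.
Variables (T : eqType) (r : rel T).

Lemma path_split_at x p u : path r x p -> u \in x :: p ->
  exists p1 p2, [/\ p = p1 ++ p2, last x p1 = u, path r x p1 & path r u p2].
Proof.
move=> rp; rewrite inE => /predU1P[-> | up]; first by exists [::], p.
move: rp; case/splitPr: up => p1 p2; rewrite cat_path /= => /and3P[rp1 rp1u rp2].
by exists (rcons p1 u), p2; rewrite cat_rcons last_rcons rcons_path rp1 rp1u.
Qed.

Lemma path_of_infix pre x p :
  (forall p1 p2 u v, pre ++ x :: p = p1 ++ u :: v :: p2 -> r u v) -> path r x p.
Proof.
elim: p pre x => [|y p IH] pre x //= Hinfix.
apply/andP; split; first exact: (Hinfix pre p).
apply: (IH (rcons pre x)) => p1 p2 u v E; apply: (Hinfix p1 p2).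
by rewrite -E -cats1 -catA.
Qed.

Lemma sorted_adjacent p1 u v p2 : sorted r (p1 ++ u :: v :: p2) -> r u v.
Proof. by rewrite sorted_cat_cons /= => /and3P[]. Qed.

End PathSplitting.

Lemma exists_argmax (d : Order.disp_t) (O : orderType d) (T : finType)
  (P : T -> Prop) (f : T -> O) x0 :
  P x0 -> exists x, P x /\ forall y, P y -> (f y <= f x)%O.
Proof.
move=> Px0.
case: (@arg_maxP _ _ T x0 (fun x => `[< P x >]) f (asboolT Px0)) => x /asboolP Px Hx.
by exists x; split => // y /asboolP /Hx.
Qed.

Section ShortestPathDag.
Variables (R : realType) (V : finType) (e : rel V) (w : V -> V -> R) (s t : V).
Hypothesis e_conn : forall x y : V, connect e x y.
Hypothesis w_pos : forall x y : V, e x y -> 0 < w x y.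

Local Notation wlen := (wlen w).
Local Notation walks := (walks e).
Local Notation dist := (dist e w).
Local Notation ds := (dist s).
Local Notation sp_st := (sp_st e w s t).
Local Notation inD := (inD e w s t).
Local Notation arcD := (arcD e w s t).
Local Notation arcb := (arcb e w s t).
Local Notation dpath := (dpath e w s t).
Local Notation anc := (anc e w s t).
Local Notation tdom := (tdom e w s t).
Local Notation It := (It e w s t).
Local Notation g := (g e w s t).
Local Notation gstar := (gstar e w s t).

Lemma wlen_cat x p q : wlen x (p ++ q) = wlen x p + wlen (last x p) q.
Proof. by elim: p x => [|y p IH] x /=; rewrite ?add0r // IH addrA. Qed.

Lemma wlen_ge0 x p : path e x p -> 0 <= wlen x p.
Proof.
elim: p x => [|y p IH] x //= /andP[exy ep].
by rewrite addr_ge0 ?IH // ltW ?w_pos.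
Qed.

Lemma wlen_gt0 x p : path e x p -> p <> [::] -> 0 < wlen x p.
Proof.
case: p => [|y p] //= /andP[exy ep] _.
by rewrite ltr_pwDl ?wlen_ge0 ?w_pos.
Qed.

(* [fine] loses nothing: the infimum lies between 0 and the length of some walk. *)
Lemma EFin_dist x y : (dist x y)%:E = ereal_inf [set (wlen x p)%:E | p in walks x y].
Proof.
set S := [set (wlen x p)%:E | p in walks x y].
have /connectP[p0 ep0 last_p0] := e_conn x y.
have : (0%:E <= ereal_inf S)%E.
  by apply: le_ereal_inf_tmp => _ [p [ep _] <-]; rewrite lee_fin wlen_ge0.
have : (ereal_inf S <= (wlen x p0)%:E)%E by apply: ereal_inf_lbound; exists p0.
by rewrite /Defs.dist -/S; case: (ereal_inf S).
Qed.

Lemma dist_le_wlen x y p : walks x y p -> dist x y <= wlen x p.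
Proof. by move=> Wp; rewrite -lee_fin EFin_dist; apply: ereal_inf_lbound; exists p. Qed.

Lemma dist_ge x y a : (forall p, walks x y p -> a <= wlen x p) -> a <= dist x y.
Proof.
move=> Ha; rewrite -lee_fin EFin_dist.
by apply: le_ereal_inf_tmp => _ [p Wp <-]; rewrite lee_fin Ha.
Qed.

Lemma walks_cat x y z p q : walks x y p -> walks y z q -> walks x z (p ++ q).
Proof. by move=> [ep <-] [eq <-]; rewrite /walks /= cat_path last_cat ep eq. Qed.

Lemma dist_triangle x y z : dist x z <= dist x y + dist y z.
Proof.
have Hpq p q : walks x y p -> walks y z q -> dist x z - wlen y q <= wlen x p.
  move=> Wp Wq; have := dist_le_wlen (walks_cat Wp Wq).
  by rewrite wlen_cat (proj2 Wp); lra.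
have Hq q : walks y z q -> dist x z - dist x y <= wlen y q.
  by move=> Wq; have := dist_ge (fun p Wp => Hpq p q Wp Wq); lra.
by have := dist_ge Hq; lra.
Qed.

Lemma sp_st_prefix p q1 q2 : sp_st p -> p = q1 ++ q2 -> ds (last s q1) = wlen s q1.
Proof.
move=> [[ep last_p] wlen_p] Ep; set m := last s q1.
move: ep last_p wlen_p; rewrite Ep cat_path last_cat wlen_cat -/m => /andP[e1 e2] L W.
have := dist_le_wlen (x := s) (y := m) (conj e1 erefl).
have := dist_le_wlen (conj e2 L); have := dist_triangle s m t; lra.
Qed.

Lemma arcD_dist u v : arcD u v -> e u v /\ ds v = ds u + w u v.
Proof.
move=> [p [Hsp [p1 [p2 Ep]]]].
have euv : e u v.
  by apply: (sorted_adjacent (p1 := p1) (p2 := p2)); rewrite -Ep; case: Hsp => [[]].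
split=> //.
have [q [Eq last_q]] : exists q, p = q ++ v :: p2 /\ last s q = u.
  case: p1 Ep => [|a p1] /= [->]; first by move=> ->; exists [::].
  by move=> ->; exists (rcons p1 u); rewrite cat_rcons last_rcons.
have := sp_st_prefix Hsp Eq.
have := sp_st_prefix (q1 := rcons q v) (q2 := p2) Hsp ltac:(by rewrite Eq cat_rcons).
by rewrite last_rcons -cats1 wlen_cat last_q /= addr0 => -> ->.
Qed.

Lemma arcD_inD u v : arcD u v -> inD u /\ inD v.
Proof.
move=> [p [Hsp [p1 [p2 Ep]]]]; split; exists p; split => //; rewrite Ep mem_cat !inE eqxx.
  by rewrite orbT.
by rewrite !orbT.
Qed.

Lemma arcbP u v : reflect (arcD u v) (arcb u v).
Proof. exact: asboolP. Qed.

Lemma sp_st_dpath p : sp_st p -> path arcb s p.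
Proof.
move=> Hsp; apply: (path_of_infix (pre := [::])) => p1 p2 u v Ep.
by apply/arcbP; exists p; split => //; exists p1, p2.
Qed.

Lemma dpath_edge x p : path arcb x p -> path e x p.
Proof. by apply: sub_path => u v /arcbP /arcD_dist []. Qed.

Lemma dpath_dist x p : path arcb x p -> ds (last x p) = ds x + wlen x p.
Proof.
elim: p x => [|y p IH] x /=; first by rewrite addr0.
by case/andP => /arcbP /arcD_dist [_ Ey] /IH ->; rewrite Ey addrA.
Qed.

Lemma dpath_cat x p y q z : dpath x p y -> dpath y q z -> dpath x (p ++ q) z.
Proof. by move=> [dp <-] [dq <-]; rewrite /Defs.dpath cat_path last_cat dp dq. Qed.

Lemma dpath_split x p y u : dpath x p y -> u \in x :: p ->
  exists p1 p2, [/\ p = p1 ++ p2, dpath x p1 u & dpath u p2 y].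
Proof.
move=> [dp <-] /(path_split_at dp) [p1 [p2 [-> L1 dp1 dp2]]].
by exists p1, p2; rewrite last_cat L1.
Qed.

Lemma anc_of_mem x p y u : dpath x p y -> u \in x :: p -> u <> y -> anc u y.
Proof.
move=> dp /(dpath_split dp) [_ [p2 [_ _ [dp2 L2]]]] uy.
by exists p2; split=> //; move=> p2_nil; apply: uy; rewrite -L2 p2_nil.
Qed.

Lemma anc_to_mem x p y u : dpath x p y -> u \in x :: p -> u <> x -> anc x u.
Proof.
move=> dp /(dpath_split dp) [p1 [_ [_ [dp1 L1] _]]] ux.
by exists p1; split=> //; move=> p1_nil; apply: ux; rewrite -L1 p1_nil.
Qed.

Lemma anc_trans x y z : anc x y -> anc y z -> anc x z.
Proof.
move=> [p [p_nil dp]] [q [_ dq]]; exists (p ++ q); split; last exact: dpath_cat dq.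
by case: p p_nil {dp}.
Qed.

Lemma anc_lt x y : anc x y -> ds x < ds y.
Proof.
move=> [p [p_nil [dp <-]]]; rewrite dpath_dist //.
by rewrite ltrDl wlen_gt0 ?dpath_edge.
Qed.

Lemma anc_inD x y : anc x y -> inD x /\ inD y.
Proof.
move=> [p [p_nil [dp <-]]]; split.
  by case: p p_nil dp => [|a p] //= _ /andP[/arcbP /arcD_inD []].
case/lastP: p p_nil dp => [|p a] // _; rewrite rcons_path last_rcons.
by case/andP=> _ /arcbP /arcD_inD [].
Qed.

Lemma dist_le_anc x y : anc x y -> dist x y <= ds y - ds x.
Proof.
move=> [p [_ [dp <-]]]; rewrite dpath_dist //.
by have := dist_le_wlen (conj (dpath_edge dp) erefl); lra.
Qed.

Lemma inD_dpath_t v : inD v -> exists q, dpath v q t.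
Proof.
move=> [p [Hsp vp]].
have [_ [q [_ _ dq]]] := dpath_split (conj (sp_st_dpath Hsp) (proj2 (proj1 Hsp))) vp.
by exists q.
Qed.

Lemma anc_neq_t x y : anc x y -> x <> t.
Proof.
move=> xy xt; have [q [dq Lq]] := inD_dpath_t (anc_inD xy).2.
have := anc_lt xy; have := dpath_dist dq; rewrite Lq -xt.
by have := wlen_ge0 (dpath_edge dq); lra.
Qed.

(* I_t(z) is the t-dominator of z nearest to s, as all of them lie on every z-t path. *)
Lemma It_Some z : inD z -> z <> t -> exists2 b, It z = Some b & tdom b z.
Proof.
move=> zD zt.
have t_dom : tdom t z by do 3!split=> //; [exact: nesym | move=> p [_ <-]; exact: mem_last].
have [b [b_dom b_min]] := exists_argmax (P := tdom^~ z) (fun x => - ds x) t_dom.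
have [q0 dq0] := inD_dpath_t zD.
have b_It : is_It e w s t z b.
  split=> [// | u u_dom ub]; case: (b_dom) => [_ [_ [bz b_on]]].
  case: (u_dom) => [_ [_ [uz u_on]]].
  have bu : ds b <= ds u by have := b_min u u_dom; lra.
  have zb := anc_to_mem dq0 (b_on _ dq0) bz.
  split; first exact: (anc_inD zb).2.
  split.
    move=> bt; have := anc_lt (anc_of_mem dq0 (u_on _ dq0) ltac:(by rewrite -bt)).
    by rewrite -bt; lra.
  split=> // q dq; have [p1 [_ [_ dp1 _]]] := dpath_split dq0 (b_on _ dq0).
  move: (u_on _ (dpath_cat dp1 dq)); rewrite -cat_cons mem_cat => /orP[up1 | uq].
    by have := anc_lt (anc_of_mem dp1 up1 ub); lra.
  by rewrite inE uq orbT.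
rewrite /Defs.It; case: pickP => [b' /asboolP [b'_dom _] | /(_ b)]; first by exists b'.
by rewrite asboolT.
Qed.

Definition reaches_t_avoiding x v := exists2 q, dpath x q t & v \notin x :: q.

Lemma reaches_t_avoiding_through y u v :
  anc y u -> v <> u -> ~ anc v u -> ~ anc u v -> reaches_t_avoiding y v.
Proof.
move=> yu vu vu' uv'; have [p [_ dp]] := yu; have [q dq] := inD_dpath_t (anc_inD yu).2.
exists (p ++ q); first exact: dpath_cat dq.
rewrite -cat_cons mem_cat negb_or; apply/andP; split; apply/negP => vpq.
  exact: vu' (anc_of_mem dp vpq vu).
by apply: uv'; apply: (anc_to_mem dq); rewrite ?inE ?vpq ?orbT.
Qed.

(* b lies on the z-t path that passes through v. *)
Lemma tdom_after_or_bypass z v b :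
  anc z v -> reaches_t_avoiding z v -> tdom b z ->
  anc v b \/ [/\ anc z b, anc b v & reaches_t_avoiding b v].
Proof.
move=> zv [qz dqz vqz] [_ [_ [bz b_on]]].
have [p [_ dp]] := zv; have [qv dqv] := inD_dpath_t (anc_inD zv).2.
have bv : b <> v by move=> bv; rewrite -bv b_on in vqz.
move: (b_on _ (dpath_cat dp dqv)); rewrite -cat_cons mem_cat => /orP[bp | bqv].
  right; split; [exact: anc_to_mem dp bp bz | exact: anc_of_mem dp bp bv |].
  have [q1 [q2 [Eqz _ dq2]]] := dpath_split dqz (b_on _ dqz).
  exists q2 => //; apply: contra vqz; rewrite inE => /predU1P[vb | vq2].
    by case: bv.
  by rewrite Eqz inE mem_cat vq2 !orbT.
by left; apply: (anc_to_mem dqv); rewrite ?inE ?bqv ?orbT.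
Qed.

Lemma farthest_bypass y v : anc y v -> reaches_t_avoiding y v ->
  exists z b, [/\ z = y \/ anc y z, anc z v, It z = Some b & anc v b].
Proof.
move=> yv yav.
pose cand x := [/\ x = y \/ anc y x, anc x v & reaches_t_avoiding x v].
have [z [[yz zv zav] z_max]] := exists_argmax (P := cand) ds (And3 (or_introl erefl) yv yav).
have [b Itz b_dom] := It_Some (anc_inD zv).1 (anc_neq_t zv).
exists z, b; split=> //.
case: (tdom_after_or_bypass zv zav b_dom) => // [[zb bv bav]].
have yb : anc y b by case: yz => [<- // | yz]; exact: anc_trans yz zb.
by have := z_max b (And3 (or_intror yb) bv bav); have := anc_lt zb; lra.
Qed.

Lemma gstar_le_g x z : inD z -> (gstar x <= g x z)%E.
Proof. by move=> zD; apply: bigmin_le_cond; apply: asboolT. Qed.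

Lemma dist_sub_le_g x u : ((ds x - ds u)%:E <= g x u)%E.
Proof.
rewrite /Defs.g; case: asboolP => _; last exact: leey.
by rewrite lee_fin; have := dist_triangle s u x; lra.
Qed.

Lemma gstar_le_bypass x y : inC e w s t x y -> reaches_t_avoiding y x ->
  exists2 z, ds y <= ds z & (gstar x <= (ds x - ds z)%:E)%E.
Proof.
rewrite /inC; case Isx: (Is e w s t x) => [a|] // [ay yx] yax.
have [z [b [yz zx Itz xb]]] := farthest_bypass yx yax.
have az : anc a z by case: yz => [-> | /(anc_trans ay)].
exists z; first by case: yz => [-> | /anc_lt /ltW].
apply: le_trans (gstar_le_g x (anc_inD zx).1) _.
rewrite /Defs.g asboolT /inC ?Isx ?Itz // lee_fin.
exact: dist_le_anc.
Qed.

End ShortestPathDag.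

Theorem corollary2 (R : realType) (V : finType) (e : rel V) (w : V -> V -> R)
  (s t : V)
  (e_sym : symmetric e) (e_irr : irreflexive e)
  (e_conn : forall x y : V, connect e x y)
  (w_sym : forall x y : V, w x y = w y x)
  (w_pos : forall x y : V, e x y -> 0 < w x y)
  (vj vi y : V) :
  inD e w s t vj -> inD e w s t vi -> vj <> s -> vi <> s -> vj <> vi ->
  dist e w s vj <= dist e w s vi ->
  inC e w s t vj y -> inC e w s t vi y ->
  ~ anc e w s t vj vi ->
  (gstar e w s t vj != +oo)%E /\
  (gstar e w s t vj <=
     \big[Order.min/+oo%E]_(u | `[< anc e w s t u y >]) g e w s t vi u)%E.
Proof.
move=> _ _ _ _ vji dj_le_di Cjy Ciy not_ji.
have yi : anc e w s t y vi by move: Ciy; rewrite /inC; case: Is => // a [].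
have not_ij : ~ anc e w s t vi vj by move=> /(anc_lt e_conn w_pos); lra.
have yav := reaches_t_avoiding_through yi vji not_ji not_ij.
have [z yz gstar_le] := gstar_le_bypass e_conn w_pos Cjy yav.
split; first by apply: contraTneq gstar_le => ->; rewrite leye_eq.
apply: le_trans gstar_le (le_bigmin _ _ _) => [|u /asboolP uy]; first exact: leey.
apply: le_trans (dist_sub_le_g s t e_conn w_pos vi u).
by rewrite lee_fin; have := anc_lt e_conn w_pos uy; lra.
Qed.
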